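(* There is a non-adaptive deterministic group testing algorithm on $n$ items that makes $t=\log n+0.5\log\log n+O(1)$ tests and decides whether $d\le 1$, and if $d=1$ detects the defective item.
   Context: Group testing: items $X=[n]$, unknown defective set $I\subseteq X$ with $d=|I|$. A test $Q\subseteq X$ has answer $1$ if $Q\cap I\neq\emptyset$ and $0$ otherwise. A non-adaptive algorithm fixes all its tests in advance, then computes its output from the answers. Logarithms are base 2. *)

From Stdlib Require Import Reals.
From mathcomp Require Import all_boot.
Set Implicit Arguments. Unset Strict Implicit. Unset Printing Implicit Defensive.

Definition log2R (x : R) : R := Rdiv (ln x) (ln (IZR 2)).

Definition answers (n t : nat) (Q : 'I_t -> {set 'I_n}) (I : {set 'I_n})
  : {ffun 'I_t -> bool} :=
  [ffun j => Q j :&: I != set0].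

(** A non-adaptive algorithm = fixed tests [Q] plus a decoder applied to
    the answers. The decoder outputs a boolean (is d <= 1 ?) and an item
    (the defective one, meaningful when d = 1). *)
Definition detects_le1 (n t : nat) (Q : 'I_t -> {set 'I_n})
  (dec : {ffun 'I_t -> bool} -> bool) (det : {ffun 'I_t -> bool} -> 'I_n) : Prop :=
  forall I : {set 'I_n},
    dec (answers Q I) = (#|I| <= 1)%N /\
    (#|I| = 1%N -> I = [set det (answers Q I)]).

(** Give each item a column: an [m]-element subset of the [2m] tests, distinct
    items getting distinct columns, which is possible once [n <= 'C(2m, m)].
    The positive tests are the union of the columns of the defective items.
    Equal-size sets form an antichain, so this union is a column exactly when
    there is one defective item, namely the owner of that column.  Choosing [m]
    least with [4 m n^2 <= 16^m], the estimate [16^m <= 4 m 'C(2m, m)^2] shows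
    the columns exist, and minimality of [m] gives
    [2m <= log n + 1/2 log log n + 3]. *)

From Stdlib Require Import Reals Lra.
From mathcomp Require Import all_boot zify.
Set Implicit Arguments. Unset Strict Implicit. Unset Printing Implicit Defensive.

Lemma card_le1_eq0_or_set1 (T : finType) (A : {set T}) :
  (#|A| <= 1) = (A == set0) || [exists x, A == [set x]].
Proof.
rewrite leq_eqVlt ltnS leqn0 cards_eq0 orbC; congr (_ || _).
by apply/cards1P/existsP => -[x Ax]; exists x; apply/eqP.
Qed.

Section AntichainDesign.

Variables (n t : nat) (col : 'I_n -> {set 'I_t}).

Definition design_tests (j : 'I_t) : {set 'I_n} := [set i | j \in col i].

Definition positive_tests (a : {ffun 'I_t -> bool}) : {set 'I_t} :=
  [set j | a j].

Definition le1_decoder (a : {ffun 'I_t -> bool}) : bool :=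
  (positive_tests a == set0) || [exists i, col i == positive_tests a].

Definition item_decoder (i0 : 'I_n) (a : {ffun 'I_t -> bool}) : 'I_n :=
  odflt i0 [pick i | col i == positive_tests a].

Hypothesis col_antichain : forall i j, col i \subset col j -> i = j.
Hypothesis col_neq0 : forall i, col i != set0.

Lemma positive_tests_answers (I : {set 'I_n}) :
  positive_tests (answers design_tests I) = \bigcup_(i in I) col i.
Proof.
apply/setP => j; rewrite !inE ffunE; apply/set0Pn/bigcupP.
  by case=> i; rewrite !inE => /andP[jci iI]; exists i.
by case=> i iI jci; exists i; rewrite !inE jci iI.
Qed.

Lemma bigcup_col_eq0 (I : {set 'I_n}) :
  (\bigcup_(i in I) col i == set0) = (I == set0).
Proof.
apply/eqP/eqP => [cup0|->]; last by rewrite big_set0.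
apply/setP => i; rewrite inE; apply/negbTE/negP => iI.
by move/eqP: (col_neq0 i); apply; apply/eqP; rewrite -subset0 -cup0 bigcup_sup.
Qed.

Lemma bigcup_col_eq_col (I : {set 'I_n}) (l : 'I_n) :
  (\bigcup_(i in I) col i == col l) = (I == [set l]).
Proof.
apply/eqP/eqP => [cupE|->]; last by rewrite big_set1.
have : I \subset [set l].
  apply/subsetP => i iI; rewrite inE; apply/eqP/col_antichain.
  by rewrite -cupE bigcup_sup.
rewrite subset1 => /orP[/eqP //|/eqP I0].
by move: (col_neq0 l); rewrite -cupE I0 big_set0 eqxx.
Qed.

Theorem design_detects_le1 (i0 : 'I_n) :
  detects_le1 design_tests le1_decoder (item_decoder i0).
Proof.
move=> I; rewrite /le1_decoder /item_decoder positive_tests_answers.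
split.
  rewrite card_le1_eq0_or_set1 bigcup_col_eq0; congr (_ || _).
  by apply: eq_existsb => l; rewrite eq_sym bigcup_col_eq_col.
move/eqP/cards1P => [i ->]; case: pickP => [l|/(_ i)].
  by rewrite eq_sym bigcup_col_eq_col => /eqP.
by rewrite big_set1 eqxx.
Qed.

End AntichainDesign.

Lemma exists_uniform_antichain (n t k : nat) : 0 < k -> n <= 'C(t, k) ->
  exists col : 'I_n -> {set 'I_t},
    (forall i j, col i \subset col j -> i = j) /\ (forall i, col i != set0).
Proof.
move=> k_gt0 n_le.
pose S := [set A : {set 'I_t} | #|A| == k].
have n_leS : n <= #|S| by rewrite card_draws card_ord.
pose col i : {set 'I_t} := enum_val (widen_ord n_leS i).
have card_col i : #|col i| = k.
  by have := enum_valP (widen_ord n_leS i); rewrite inE => /eqP.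
exists col; split=> [i j sub_ij|i].
  have : col i == col j by rewrite eqEcard sub_ij /= !card_col.
  by rewrite /col => /eqP/enum_val_inj/(congr1 val)/= /val_inj.
by rewrite -card_gt0 card_col.
Qed.

Lemma central_bin_rec m : m.+1 * 'C(m.+1.*2, m.+1) = (m.*2.+1).*2 * 'C(m.*2, m).
Proof.
have sym : 'C(m.*2.+1, m) = 'C(m.*2.+1, m.+1).
  by rewrite -bin_sub; [congr 'C(_, _); lia | lia].
have diag := mul_bin_diag m.*2.+1 m.
rewrite /= in diag; rewrite doubleS binS sym.
nia.
Qed.

Lemma central_bin_lower m : 0 < m -> 16 ^ m <= 4 * m * 'C(m.*2, m) ^ 2.
Proof.
elim: m => // m IH _; case: (posnP m) => [-> //|/IH {}IH].
have rec := central_bin_rec m.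
set B := 'C(m.*2, m) in IH rec *; set B' := 'C(_, m.+1) in rec *.
rewrite -(leq_pmul2l (ltn0Sn m)).
have -> : m.+1 * (4 * m.+1 * B' ^ 2) = 4 * (m.*2.+1).*2 ^ 2 * B ^ 2.
  have := congr1 (fun x => 4 * x ^ 2) rec; rewrite /= !expnMn; nia.
have amgm : m.+1 * (4 * m) <= (m.*2.+1) ^ 2 by rewrite -muln2; nia.
apply: (@leq_trans (16 * (m.+1 * (4 * m * B ^ 2)))).
  by rewrite expnS mulnCA !leq_mul2l IH !orbT.
rewrite -muln2; nia.
Qed.

Lemma exists_least_exponent n :
  exists k, 4 * k.+1 * n ^ 2 <= 16 ^ k.+1 /\ (k = 0 \/ 16 ^ k < 4 * k * n ^ 2).
Proof.
have ex : exists k, 4 * k.+1 * n ^ 2 <= 16 ^ k.+1.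
  exists n.
  have n_lt := ltn_expl n (ltnSn 1).
  set X := 2 ^ n in n_lt.
  have -> : 16 ^ n.+1 = 16 * X ^ 4.
    by rewrite expnS /X -expnM (mulnC n) expnM.
  have : n.+1 * n ^ 2 <= X ^ 3.
    by rewrite expnS; apply: leq_mul => //; rewrite leq_sqr ltnW.
  nia.
case: (ex_minnP ex) => k fits kmin.
exists k; split=> //; case: k fits kmin => [|k] _ kmin; [by left | right].
by rewrite ltnNge; apply/negP => /kmin; rewrite ltnn.
Qed.

Lemma leq_central_bin (n m : nat) : 0 < m -> 4 * m * n ^ 2 <= 16 ^ m ->
  n <= 'C(m.*2, m).
Proof.
move=> m_gt0 fits; rewrite -leq_sqr -(@leq_pmul2l (4 * m)) ?muln_gt0 //.
exact: leq_trans fits (central_bin_lower m_gt0).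
Qed.

Section Log2Bounds.

Local Open Scope R_scope.

Lemma INR_expn (m k : nat) : INR (m ^ k) = INR m ^ k.
Proof. by elim: k => // k IH; rewrite expnS mult_INR IH. Qed.

Lemma log2R_lt (a b : R) : 0 < a -> a < b -> log2R a < log2R b.
Proof.
move=> a_gt0 ab; apply: Rmult_lt_compat_r; last exact: ln_increasing.
by apply: Rinv_0_lt_compat; have := ln_lt_2; lra.
Qed.

Lemma log2R_le (a b : R) : 0 < a -> a <= b -> log2R a <= log2R b.
Proof. by move=> a_gt0 [ab|->]; [left; apply: log2R_lt | right]. Qed.

Lemma log2R_INR_lt (a b : nat) : (0 < a)%N -> (a < b)%N ->
  log2R (INR a) < log2R (INR b).
Proof. by move=> /ltP/lt_0_INR a_gt0 /ltP/lt_INR; apply: log2R_lt. Qed.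

Lemma log2R_INR_mul (a b : nat) : (0 < a)%N -> (0 < b)%N ->
  log2R (INR (a * b)) = log2R (INR a) + log2R (INR b).
Proof.
move=> /ltP/lt_0_INR a_gt0 /ltP/lt_0_INR b_gt0.
by rewrite mult_INR /log2R ln_mult // /Rdiv Rmult_plus_distr_r.
Qed.

Lemma log2R_INR_exp2 (k : nat) : log2R (INR (2 ^ k)) = INR k.
Proof. by rewrite INR_expn; apply: Rlog_pow => /=; lra. Qed.

Lemma log2R_INR2 : log2R (INR 2) = 1.
Proof. by rewrite -[2%N]/(2 ^ 1)%N log2R_INR_exp2. Qed.

Lemma doubled_exponent_bound (n k : nat) : (2 <= n)%N ->
  (k = 0 \/ 16 ^ k < 4 * k * n ^ 2)%N ->
  INR (k.+1).*2 <= log2R (INR n) + / 2 * log2R (log2R (INR n)) + 3.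
Proof.
move=> n_ge2 k_min; set x := log2R (INR n).
have x_ge1 : 1 <= x.
  by rewrite -log2R_INR2; apply: log2R_le; [rewrite /=; lra | apply/le_INR/leP].
have logx_ge0 : 0 <= log2R x.
  have <- : log2R 1 = 0 by rewrite /log2R ln_1 /Rdiv Rmult_0_l.
  by apply: log2R_le; lra.
have -> : INR (k.+1).*2 = 2 * INR k + 2 by rewrite -muln2 mult_INR S_INR /=; ring.
case: k_min => [->|k_min]; first by rewrite /=; lra.
have k_gt0 : (0 < k)%N by case: k k_min.
have n_gt0 : (0 < n)%N by apply: leq_trans n_ge2.
have four_k : (4 * k <= 4 ^ k)%N.
  have := ltn_expl k (ltnSn 1); rewrite -[4%N]/(2 * 2)%N expnMn; nia.
have exp4_lt : (4 ^ k < n ^ 2)%N.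
  rewrite -(@ltn_pmul2l (4 ^ k)) ?expn_gt0 // -expnMn.
  by apply: leq_trans k_min _; rewrite leq_mul2r four_k orbT.
have k_lt_x : INR k < x.
  move: exp4_lt; rewrite -[4%N]/(2 ^ 2)%N -expnM -mulnn.
  move/log2R_INR_lt; rewrite expn_gt0 => /(_ isT).
  by rewrite log2R_INR_exp2 log2R_INR_mul // mult_INR -/x /=; lra.
have k_bound : 4 * INR k < 2 + log2R (INR k) + 2 * x.
  have := log2R_INR_lt _ k_min; rewrite expn_gt0 => /(_ isT).
  rewrite -[16%N]/(2 ^ 4)%N -expnM log2R_INR_exp2.
  rewrite -[(4 * k * n ^ 2)%N]/(2 * 2 * k * (n * n))%N.
  rewrite !log2R_INR_mul ?muln_gt0 ?k_gt0 ?n_gt0 //.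
  by rewrite log2R_INR2 mult_INR -/x /=; lra.
have : log2R (INR k) < log2R x by apply: log2R_lt => //; apply/lt_0_INR/ltP.
lra.
Qed.

End Log2Bounds.

Theorem lemma9 :
  exists C : R, forall n : nat, (2 <= n)%N ->
    exists (t : nat) (Q : 'I_t -> {set 'I_n})
           (dec : {ffun 'I_t -> bool} -> bool)
           (det : {ffun 'I_t -> bool} -> 'I_n),
      detects_le1 Q dec det /\
      Rle (INR t) (Rplus (Rplus (log2R (INR n)) (Rmult (Rinv (IZR 2)) (log2R (log2R (INR n))))) C).
Proof.
exists (IZR 3) => n n_ge2.
have [k [fits least]] := exists_least_exponent n.
have [col [col_antichain col_neq0]] :=
  exists_uniform_antichain (ltn0Sn k) (leq_central_bin (ltn0Sn k) fits).
exists (k.+1).*2, (design_tests col), (le1_decoder col),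
  (item_decoder col (Ordinal (ltnW n_ge2))).
split; [exact: design_detects_le1 | exact: doubled_exponent_bound].
Qed.
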